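(* Let $X$ be a discrete metric space with bounded geometry (balls of radius $r$ have at most $v(r)<\infty$ elements) and let $Y$ be a set. If $A=(a_{y,x})_{(y,x)\in Y\times X}$ is thin-$\emptyset$, then $A^*A$ (when it exists) is banded, i.e. there is $N<\infty$ such that $(A^*A)_{x,x'}=0$ whenever $d(x,x')>N$.
   Context: $A$ is thin-$\emptyset$ if there is $r<\infty$ such that every row $(a_{y,x})_{x\in X}$ has support contained in a ball of radius $r$ in $X$; no condition is imposed on columns. *)

From mathcomp Require Import all_boot all_order all_algebra.
From mathcomp Require Import reals.
From mathcomp.real_closed Require Import complex.
Set Implicit Arguments. Unset Strict Implicit. Unset Printing Implicit Defensive.
Import Order.TTheory GRing.Theory Num.Theory.
Local Open Scope ring_scope.

Definition is_metric (R : realType) (X : Type) (d : X -> X -> R) : Prop :=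
  [/\ forall x y, 0 <= d x y,
      forall x y, (d x y = 0) <-> (x = y),
      forall x y, d x y = d y x &
      forall x y z, d x z <= d x y + d y z].

Definition bounded_geometry (R : realType) (X : eqType) (d : X -> X -> R) : Prop :=
  forall r : R, exists v : nat, forall (x : X) (s : seq X),
    uniq s -> (forall z, z \in s -> d x z <= r) -> (size s <= v)%N.

Definition thin_empty (R : realType) (X Y : Type) (d : X -> X -> R)
    (a : Y -> X -> R[i]) : Prop :=
  exists r : R, forall y : Y, exists c : X,
    forall x : X, a y x != 0 -> d c x <= r.

(* unconditional convergence of a family f : Y -> R[i] to s, along the net of
   finite subsets of Y *)
Definition has_sum (R : realType) (Y : eqType) (f : Y -> R[i]) (s : R[i]) : Prop :=
  forall eps : R, 0 < eps -> exists F0 : seq Y, forall F : seq Y,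
    uniq F -> {subset F0 <= F} -> `|\sum_(y <- F) f y - s| < (eps%:C)%C.

Definition is_adjoint_product (R : realType) (X Y : eqType)
    (a : Y -> X -> R[i]) (B : X -> X -> R[i]) : Prop :=
  forall x x' : X, has_sum (fun y => (a y x)^* * a y x') (B x x').

Definition banded (R : realType) (X : Type) (d : X -> X -> R)
    (B : X -> X -> R[i]) : Prop :=
  exists N : R, forall x x' : X, N < d x x' -> B x x' = 0.

From mathcomp Require Import all_boot all_order all_algebra.
From mathcomp Require Import reals.
From mathcomp.real_closed Require Import complex.
Import Order.TTheory GRing.Theory Num.Theory.
Local Open Scope ring_scope.

(* If row y of A is supported in a ball of radius r, the product
   conj(a_{y,x}) a_{y,x'} can only be nonzero when x and x' both lie in that
   ball, hence d(x, x') <= 2r.  So every term of the series defining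
   (A^*A)_{x,x'} vanishes once d(x, x') > 2r, and so does its sum. *)

Lemma metric_le_diam {R : realType} {X : Type} {d : X -> X -> R} {c x x' : X}
    {r : R} :
  is_metric d -> d c x <= r -> d c x' <= r -> d x x' <= r + r.
Proof.
move=> [_ _ dC dT] hx hx'.
by apply: le_trans (dT x c x') _; rewrite dC lerD.
Qed.

Lemma has_sum0 {R : realType} {Y : eqType} {f : Y -> R[i]} {s : R[i]} :
  (forall y, f y = 0) -> has_sum f s -> s = 0.
Proof.
move=> f0 hs; apply/eqP; apply: contraT => s_neq0.
have : 0 < `|s| by rewrite normr_gt0.
rewrite normc_def ltcR => /hs [F0 hF0].
have /hF0 : {subset F0 <= undup F0} by move=> z; rewrite mem_undup.
move=> /(_ (undup_uniq F0)).
by rewrite big1 // sub0r normrN normc_def ltcR ltxx.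
Qed.

Lemma thin_row_product_eq0 {R : realType} {X Y : Type} {d : X -> X -> R}
    {a : Y -> X -> R[i]} {r : R} {y : Y} {x x' : X} :
  is_metric d -> (exists c, forall z, a y z != 0 -> d c z <= r) ->
  r + r < d x x' -> (a y x)^* * a y x' = 0.
Proof.
move=> dm [c hc] far.
have [->|ax] := eqVneq (a y x) 0; first by rewrite conjC0 mul0r.
have [->|ax'] := eqVneq (a y x') 0; first by rewrite mulr0.
by move: far; rewrite ltNge (metric_le_diam dm (hc _ ax) (hc _ ax')).
Qed.

Theorem proposition3p2 (R : realType) (X Y : eqType) (d : X -> X -> R)
    (a : Y -> X -> R[i]) (B : X -> X -> R[i]) :
  is_metric d -> bounded_geometry d ->
  thin_empty d a -> is_adjoint_product a B -> banded d B.
Proof.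
move=> dm _ [r thin] hB; exists (r + r) => x x' far.
apply: (has_sum0 _ (hB x x')) => y.
exact: thin_row_product_eq0 dm (thin y) far.
Qed.
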